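(* Let $X$ be a finite connected poset and $\theta:B\to B$ a bijection. Then $\theta$ is admissible if and only if $s^+_{\theta,\Gamma}(z)-s^-_{\theta,\Gamma}(z)=t^+_{\theta,\Gamma}(z)-t^-_{\theta,\Gamma}(z)$ holds for every cycle $\Gamma$ in $X$ and every $z\in X$.
   Context: For $x<y$ let $e_{xy}$ denote the pair/basis symbol indexed by $(x,y)$ and $B=\{e_{xy}:x<y\}$. A walk in $X$ is a sequence $u_0,\dots,u_m$ such that for each $i$ one of $u_i,u_{i+1}$ covers the other; it is closed if $u_0=u_m$; a cycle is a closed walk $u_0,\dots,u_m=u_0$ with $m\ge4$ and $u_i\ne u_j$ for all $i\ne j$ other than $\{i,j\}=\{0,m\}$. $X$ is connected if any two elements are joined by a walk. For a closed walk $\Gamma:u_0,\dots,u_m=u_0$ and $z\in X$: $s^+_{\theta,\Gamma}(z)$ is the number of $i$ with $u_i<u_{i+1}$ such that $\theta(e_{zw})=e_{u_iu_{i+1}}$ for some $w>z$; $s^-_{\theta,\Gamma}(z)$ the number of $i$ with $u_i>u_{i+1}$ such that $\theta(e_{zw})=e_{u_{i+1}u_i}$ for some $w>z$; $t^+_{\theta,\Gamma}(z)$ the number of $i$ with $u_i<u_{i+1}$ such that $\theta(e_{wz})=e_{u_iu_{i+1}}$ for some $w<z$; $t^-_{\theta,\Gamma}(z)$ the number of $i$ with $u_i>u_{i+1}$ such that $\theta(e_{wz})=e_{u_{i+1}u_i}$ for some $w<z$. $\theta$ is admissible if $s^+_{\theta,\Gamma}(z)-s^-_{\theta,\Gamma}(z)=t^+_{\theta,\Gamma}(z)-t^-_{\theta,\Gamma}(z)$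 for every closed walk $\Gamma$ and every $z\in X$. *)

From mathcomp Require Import all_boot all_order all_algebra.
Set Implicit Arguments. Unset Strict Implicit. Unset Printing Implicit Defensive.
Import Order.Theory.
Local Open Scope order_scope.

Section Defs.
Context {d : Order.disp_t} {X : finPOrderType d}.

Definition covers (x y : X) : bool :=
  (x < y) && [forall z : X, ~~ ((x < z) && (z < y))].

Definition adj (x y : X) : bool := covers x y || covers y x.

Definition B : Type := {p : X * X | p.1 < p.2}.

(* a walk u_0, u_1, ..., u_m is represented by u_0 and s = [:: u_1; ...; u_m] *)
Definition is_walk (u0 : X) (s : seq X) : bool := path adj u0 s.
Definition is_closed_walk (u0 : X) (s : seq X) : bool :=
  is_walk u0 s && (last u0 s == u0).
Definition is_cycle (u0 : X) (s : seq X) : bool :=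
  is_closed_walk u0 s && (4 <= size s)%N && uniq s.

Definition connected_poset : Prop :=
  forall x y : X, exists s : seq X, is_walk x s && (last x s == y).

Definition wu (u0 : X) (s : seq X) (i : nat) : X := nth u0 (u0 :: s) i.

Variable theta : B -> B.

Definition hits_from (z a b : X) : bool :=
  [exists w : B, ((val w).1 == z) && (val (theta w) == (a, b))].
Definition hits_to (z a b : X) : bool :=
  [exists w : B, ((val w).2 == z) && (val (theta w) == (a, b))].

Definition s_plus (u0 : X) (s : seq X) (z : X) : nat :=
  count (fun i => (wu u0 s i < wu u0 s i.+1) && hits_from z (wu u0 s i) (wu u0 s i.+1))
        (iota 0 (size s)).
Definition s_minus (u0 : X) (s : seq X) (z : X) : nat :=
  count (fun i => (wu u0 s i.+1 < wu u0 s i) && hits_from z (wu u0 s i.+1) (wu u0 s i))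
        (iota 0 (size s)).
Definition t_plus (u0 : X) (s : seq X) (z : X) : nat :=
  count (fun i => (wu u0 s i < wu u0 s i.+1) && hits_to z (wu u0 s i) (wu u0 s i.+1))
        (iota 0 (size s)).
Definition t_minus (u0 : X) (s : seq X) (z : X) : nat :=
  count (fun i => (wu u0 s i.+1 < wu u0 s i) && hits_to z (wu u0 s i.+1) (wu u0 s i))
        (iota 0 (size s)).

Definition balanced (u0 : X) (s : seq X) (z : X) : Prop :=
  ((s_plus u0 s z)%:Z - (s_minus u0 s z)%:Z =
   (t_plus u0 s z)%:Z - (t_minus u0 s z)%:Z)%R.

Definition admissible : Prop :=
  forall (u0 : X) (s : seq X), is_closed_walk u0 s -> forall z : X, balanced u0 s z.

End Defs.

(* For a fixed z, a walk is balanced exactly when an integer weight on its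
   steps, antisymmetric in the two endpoints, sums to zero along the walk.
   Such sums are additive under concatenation, so a closed walk visiting some
   vertex twice is the sum of two shorter closed walks.  A closed walk without
   repetitions is either a cycle or has at most three steps, and those vanish:
   one step is impossible (covering is irreflexive), a back-and-forth walk
   cancels by antisymmetry, and three steps are impossible because the
   covering graph of a poset has no triangles.  Induction on the length then
   reduces admissibility to cycles. *)
From mathcomp Require Import all_boot all_order all_algebra.
From mathcomp Require Import zify.
Import Order.Theory GRing.Theory.
Local Open Scope ring_scope.

Set Implicit Arguments.
Unset Strict Implicit.
Unset Printing Implicit Defensive.

Section WalkSum.
Variables (T : eqType) (V : zmodType).

Definition steps (x : T) (s : seq T) : seq (T * T) := zip (x :: s) s.

Lemma steps_cat x s1 s2 : steps x (s1 ++ s2) = steps x s1 ++ steps (last x s1) s2.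
Proof. by elim: s1 x => [|y s1 IH] x //=; rewrite -IH. Qed.

Lemma count_steps (Q : rel T) x s :
  count (fun i => Q (nth x (x :: s) i) (nth x (x :: s) i.+1)) (iota 0 (size s)) =
  count (fun p => Q p.1 p.2) (steps x s).
Proof.
elim: s x => [|y s IH] x //=; rewrite -IH -(addn0 1%N) iotaDl count_map.
congr (_ + _)%N; apply: eq_in_count => i; rewrite mem_iota => /andP [_ lt_is].
by rewrite /= add0n !(set_nth_default x y) // ltnW.
Qed.

Definition walk_sum (f : T -> T -> V) (x : T) (s : seq T) : V :=
  \sum_(p <- steps x s) f p.1 p.2.

Lemma walk_sum_cat f x s1 s2 :
  walk_sum f x (s1 ++ s2) = walk_sum f x s1 + walk_sum f (last x s1) s2.
Proof. by rewrite /walk_sum steps_cat big_cat. Qed.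

End WalkSum.

Lemma not_uniq_split (T : eqType) (s : seq T) :
  ~~ uniq s -> exists a v b1 b2, s = a ++ v :: b1 ++ v :: b2.
Proof.
elim: s => [|x s IH] //=; rewrite negb_and negbK => /orP [/splitPr [b1 b2] | /IH].
  by exists [::], x, b1, b2.
by case=> a [v [b1 [b2 ->]]]; exists (x :: a), v, b1, b2.
Qed.

Section ClosedWalks.
Variables (T : eqType) (V : zmodType) (e : rel T) (f : T -> T -> V).
Hypothesis e_irr : irreflexive e.
Hypothesis e_triangle_free : forall x y z, e x y -> e y z -> e z x -> False.
Hypothesis f_antisym : forall x y, e x y -> f x y = - f y x.

Lemma walk_sum_short_closed x s :
  path e x s -> last x s = x -> (size s < 4)%N -> walk_sum f x s = 0.
Proof.
case: s => [|y [|z [|w [|? ?]]]] //= walk_s last_s _; rewrite /walk_sum /steps /=.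
- by rewrite big_nil.
- by move: walk_s; rewrite last_s e_irr.
- by rewrite last_s big_cons big_seq1 f_antisym ?addNr //; case/andP: walk_s.
- by case/and4P: walk_s; rewrite last_s => xy yz zx _; case: (e_triangle_free xy yz zx).
Qed.

Hypothesis walk_sum_cycle : forall x s,
  path e x s -> last x s = x -> (4 <= size s)%N -> uniq s -> walk_sum f x s = 0.

Lemma walk_sum_closed x s : path e x s -> last x s = x -> walk_sum f x s = 0.
Proof.
have [n] := ubnP (size s); elim: n x s => // n IH x s.
rewrite ltnS => size_s walk_s last_s.
case: (boolP (uniq s)) => [uniq_s | /not_uniq_split [a [v [b1 [b2 def_s]]]]].
  case: (ltnP (size s) 4) => [short | long]; first exact: walk_sum_short_closed.
  exact: walk_sum_cycle.
move: def_s walk_s size_s last_s; rewrite -!cat_rcons => ->.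
rewrite !size_cat !size_rcons !cat_path !last_cat !last_rcons.
case/and3P => walk_a walk_b1 walk_b2 size_s last_s.
have := walk_sum_cat f x (rcons a v) b2; rewrite last_rcons => splice.
rewrite !walk_sum_cat !last_rcons addrCA -splice.
rewrite (IH x (rcons a v ++ b2)) ?(IH v (rcons b1 v)) ?addr0 //.
- by rewrite size_rcons; lia.
- by rewrite last_rcons.
- by rewrite size_cat size_rcons; lia.
- by rewrite cat_path walk_a last_rcons walk_b2.
- by rewrite last_cat last_rcons.
Qed.

End ClosedWalks.

Lemma count_int_sum (T : Type) (P : pred T) (s : seq T) :
  (count P s)%:Z = \sum_(x <- s) (P x : nat)%:Z.
Proof. by elim: s => [|x s IH]; rewrite ?big_nil ?big_cons //= PoszD IH. Qed.

Section CoveringGraph.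
Context {d : Order.disp_t} {X : finPOrderType d}.

Lemma covers_lt (x y : X) : covers x y -> (x < y)%O.
Proof. by case/andP. Qed.

Lemma covers_skip (x y z : X) : covers x z -> (x < y)%O -> (y < z)%O -> False.
Proof. by case/andP=> _ /forallP /(_ y); rewrite negb_and => /orP [] /negP. Qed.

Lemma adj_irr : irreflexive (@adj d X).
Proof. by move=> x; rewrite /adj /covers ltxx. Qed.

(* Each orientation of a triangle is either a directed 3-cycle or a chain
   whose long edge skips the middle vertex. *)
Lemma adj_triangle_free (x y z : X) : adj x y -> adj y z -> adj z x -> False.
Proof.
rewrite /adj => /orP [] xy /orP [] yz /orP [] zx;
match goal with
| H : is_true (covers ?a ?c), H1 : is_true (covers ?a ?b),
  H2 : is_true (covers ?b ?c) |- _ =>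
    exact: (covers_skip H (covers_lt H1) (covers_lt H2))
| H1 : is_true (covers ?a ?b), H2 : is_true (covers ?b ?c),
  H3 : is_true (covers ?c ?a) |- _ =>
    by have := lt_trans (lt_trans (covers_lt H1) (covers_lt H2)) (covers_lt H3);
       rewrite ltxx
end.
Qed.

End CoveringGraph.

Section Balance.
Context {d : Order.disp_t} {X : finPOrderType d}.
Variable theta : @B d X -> @B d X.

Definition step_weight (z a b : X) : int :=
  ((a < b)%O && hits_from theta z a b)%:Z - ((a < b)%O && hits_to theta z a b)%:Z.

Definition net_flow (z a b : X) : int := step_weight z a b - step_weight z b a.

Lemma balancedE u0 s z : balanced theta u0 s z <-> walk_sum (net_flow z) u0 s = 0.
Proof.
rewrite /balanced /s_plus /s_minus /t_plus /t_minus /wu.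
rewrite (count_steps (fun a b => (a < b)%O && hits_from theta z a b)).
rewrite (count_steps (fun a b => (b < a)%O && hits_from theta z b a)).
rewrite (count_steps (fun a b => (a < b)%O && hits_to theta z a b)).
rewrite (count_steps (fun a b => (b < a)%O && hits_to theta z b a)).
rewrite !count_int_sum.
have rearrange (a b c e : int) : a - b = c - e <-> a - c - (b - e) = 0 by split=> ?; lia.
by rewrite /walk_sum /net_flow /step_weight !sumrB rearrange.
Qed.

End Balance.

Theorem lemma5p13 (d : Order.disp_t) (X : finPOrderType d)
  (theta : @B d X -> @B d X) :
  @connected_poset d X -> bijective theta ->
  (admissible theta <->
   forall (u0 : X) (s : seq X), is_cycle u0 s -> forall z : X, balanced theta u0 s z).
Proof.
move=> _ _; split=> [admissible_theta u0 s /andP [/andP [closed_s _] _] | balanced_cycles].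
  exact: admissible_theta.
move=> u0 s /andP [walk_s /eqP last_s] z; apply/balancedE.
have flow_antisym (x y : X) : adj x y -> net_flow theta z x y = - net_flow theta z y x.
  by move=> _; rewrite /net_flow [RHS]opprB.
apply: (walk_sum_closed adj_irr adj_triangle_free flow_antisym _ walk_s last_s).
move=> x t walk_t last_t size_t uniq_t; apply/balancedE/balanced_cycles.
by rewrite /is_cycle /is_closed_walk /is_walk walk_t last_t eqxx size_t uniq_t.
Qed.
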